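(* Let $\mathbb S$ be the Sorgenfrey line (the reals with topology generated by intervals $[a,b)$). Then every function from $\mathbb S$ to a metric space is weakly separated, and the function $\chi_{\mathbb Q}\colon\mathbb S\to\mathbb R$ is weakly separated but not Borel 1.
   Context: For a topological space $X$ and metric space $(Y,d)$, a neighborhood assignment is a family $\{V_x\}_{x\in X}$ of open subsets of $X$ with $x\in V_x$. $f\colon X\to Y$ is weakly separated if for every $\varepsilon>0$ there is a neighborhood assignment $\{V_x\}_{x\in X}$ such that for all $x,y\in X$, $(x,y)\in V_y\times V_x$ implies $d(f(x),f(y))<\varepsilon$; Borel 1 if $f^{-1}(V)$ is $F_\sigma$ in $X$ for every open $V\subseteq Y$. $\chi_{\mathbb Q}$ is the characteristic function of the rationals. *)

From HB Require Import structures.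
From mathcomp Require Import all_boot all_order all_algebra.
From mathcomp Require Import all_classical all_reals all_analysis borel_hierarchy.
Set Implicit Arguments. Unset Strict Implicit. Unset Printing Implicit Defensive.
Import Order.TTheory GRing.Theory Num.Theory.
Import numFieldNormedType.Exports.
Local Open Scope classical_set_scope.
Local Open Scope ring_scope.

Definition sorgenfrey (R : realType) : Type := R.

HB.instance Definition _ (R : realType) := Choice.on (sorgenfrey R).

Definition sorgenfrey_interval (R : realType) (p : R * R) : set (sorgenfrey R) :=
  [set x : sorgenfrey R | p.1 <= (x : R) < p.2].

HB.instance Definition _ (R : realType) :=
  isSubBaseTopological.Build (sorgenfrey R) setT (@sorgenfrey_interval R).

Definition is_metric (R : realType) (Y : Type) (d : Y -> Y -> R) : Prop :=
  [/\ forall x y, 0 <= d x y,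
      forall x y, d x y = 0 <-> x = y,
      forall x y, d x y = d y x &
      forall x y z, d x z <= d x y + d y z].

Definition weakly_separated (R : realType) (X : topologicalType) (Y : Type)
  (d : Y -> Y -> R) (f : X -> Y) : Prop :=
  forall eps : R, 0 < eps ->
    exists V : X -> set X,
      (forall x, open (V x) /\ V x x) /\
      (forall x y, V y x -> V x y -> d (f x) (f y) < eps).

Definition borel1 (X Y : topologicalType) (f : X -> Y) : Prop :=
  forall V : set Y, open V -> Fsigma (f @^-1` V).

Definition chiQ (R : realType) (x : sorgenfrey R) : R :=
  if `[< exists q : rat, (x : R) = ratr q >] then 1 else 0.

Definition dist_R (R : realType) (x y : R) : R := `|x - y|.

From HB Require Import structures.
From mathcomp Require Import all_boot all_order all_algebra.
From mathcomp Require Import all_classical all_reals all_analysis.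
From mathcomp Require Import finmap.
From mathcomp.algebra_tactics Require Import lra.
Import Order.TTheory GRing.Theory Num.Theory.
Import numFieldNormedType.Exports.
Local Open Scope classical_set_scope.
Local Open Scope ring_scope.

(* With the neighbourhood assignment V_x = [x, x + 1), the condition
   x \in V_y /\ y \in V_x forces y <= x <= y, i.e. x = y; hence every map
   out of the Sorgenfrey line is weakly separated.
   For chiQ, the preimage of (-oo, 1/2) is the set of irrationals.  If it were
   a union of Sorgenfrey-closed sets F_k, each F_k would miss the rationals, so
   its complement would contain an interval [q, q + e) at every rational q;
   thus every interval has a closed subinterval missing F_k and the k-th
   rational.  Nested closed intervals then yield a point outside every F_k
   that is not rational either, a contradiction. *)

Section SorgenfreyLine.
Variable R : realType.

Lemma right_interval_sub_fin_meet (x : R) (s : seq (R * R)) :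
  (forall p, p \in s -> p.1 <= x < p.2) ->
  exists2 e : R, 0 < e & forall y : R, x <= y < x + e ->
    forall p, p \in s -> p.1 <= y < p.2.
Proof.
elim: s => [|p s IH] xs; first by exists 1 => // y _ p; rewrite in_nil.
have [e e0 He] := IH (fun q qs => xs q (mem_behead (qs : q \in behead (p :: s)))).
have /andP[p1 p2] := xs p (mem_head _ _).
exists (Num.min e (p.2 - x)); first by rewrite lt_min e0 subr_gt0.
have [me mp] : Num.min e (p.2 - x) <= e /\ Num.min e (p.2 - x) <= p.2 - x.
  by split; rewrite ge_min lexx ?orbT.
move=> y /andP[xy ym] q; rewrite in_cons => /orP[/eqP->|qs].
  by rewrite (le_trans p1 xy) /=; lra.
by apply: He; rewrite // xy /=; lra.
Qed.

Lemma sorgenfrey_nbhs_right (x : sorgenfrey R) (U : set (sorgenfrey R)) :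
  nbhs x U -> exists2 e : R, 0 < e & forall y : R, x <= y < x + e -> U y.
Proof.
move=> [B [[D sD <-] [C DC Cx] sBU]].
have [F _ CF] := sD C DC; rewrite -CF in Cx.
have [e e0 He] := @right_interval_sub_fin_meet x _ (fun p pF => Cx p pF).
exists e => // y xy; apply: sBU; exists C; first exact: DC.
by change (C y); rewrite -CF => p pF; exact: He.
Qed.

Lemma open_sorgenfrey_interval (p : R * R) : open (sorgenfrey_interval p).
Proof.
rewrite openE => x px; exists (sorgenfrey_interval p); split => //.
exists [set sorgenfrey_interval p]; last by rewrite bigcup_set1.
move=> A ->; exists (fset1 p); last by rewrite set_fset1 bigcap_set1.
by move=> q _; apply/mem_set.
Qed.

Lemma sorgenfrey_weakly_separated (Y : Type) (d : Y -> Y -> R)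
  (f : sorgenfrey R -> Y) : (forall y, d y y = 0) -> weakly_separated d f.
Proof.
move=> d0 eps eps_gt0.
exists (fun x => sorgenfrey_interval ((x : R), (x : R) + 1)); split.
  by move=> x; split; [exact: open_sorgenfrey_interval | rewrite /sorgenfrey_interval /=; lra].
move=> x y /andP[/= yx _] /andP[/= xy _].
have -> : x = y by apply/eqP; rewrite eq_le xy yx.
by rewrite d0.
Qed.

Definition subitv_avoiding (A : set R) (a b : R) (p : R * R) : Prop :=
  [/\ a <= p.1, p.1 < p.2, p.2 <= b & forall z, p.1 <= z <= p.2 -> ~ A z].

Definition itv_nowhere_dense (A : set R) : Prop :=
  forall a b : R, a < b -> exists p, subitv_avoiding A a b p.

Lemma itv_nowhere_dense_set1 (t : R) : itv_nowhere_dense [set t].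
Proof.
move=> a b ab; have [tm|mt] := ltP t ((a + b) / 2).
  by exists ((a + b) / 2, b); split => /= [||| z /andP[mz _] /= zt]; lra.
by exists (a, (3 * a + b) / 4); split => /= [||| z /andP[_ zm] /= zt]; lra.
Qed.

Lemma itv_nowhere_denseU (A B : set R) :
  itv_nowhere_dense A -> itv_nowhere_dense B -> itv_nowhere_dense (A `|` B).
Proof.
move=> ndA ndB a b ab.
have [p [ap p12 pb pA]] := ndA a b ab.
have [q [pq q12 qp qB]] := ndB _ _ p12.
exists q; split; [exact: le_trans pq|exact: q12|exact: le_trans qp pb|].
move=> z /andP[qz zq] [|]; last by apply: qB; rewrite qz zq.
by apply: pA; rewrite (le_trans pq qz) (le_trans zq qp).
Qed.

Lemma sorgenfrey_closed_itv_nowhere_dense (F : set (sorgenfrey R)) :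
  closed F -> (forall r : rat, ~ F (ratr r)) -> itv_nowhere_dense F.
Proof.
move=> cF Fr a b ab.
have [r] := rat_in_itvoo ab; rewrite in_itv /= => /andP[ar rb].
have : nbhs (ratr r : sorgenfrey R) (~` F).
  by move: (cF); rewrite -openC openE; apply; exact: Fr.
move=> /sorgenfrey_nbhs_right[e e0 He].
pose c := Num.min e (b - ratr r).
have c0 : 0 < c by rewrite lt_min e0 subr_gt0.
have [ce cb] : c <= e /\ c <= b - ratr r by split; rewrite ge_min lexx ?orbT.
exists (ratr r, ratr r + c / 2); split => /=; [lra|lra|lra|].
by move=> z /andP[rz zc]; apply: He; rewrite rz /=; lra.
Qed.

Lemma nested_intervals_meet (s : nat -> R * R) :
  (forall k, (s k).1 <= (s k).2) ->
  (forall k, (s k).1 <= (s k.+1).1 /\ (s k.+1).2 <= (s k).2) ->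
  exists x, forall k, (s k).1 <= x <= (s k).2.
Proof.
move=> s12 nested.
have mono j k : (j <= k)%N -> (s j).1 <= (s k).1 /\ (s k).2 <= (s j).2.
  move=> /subnK <-; elim: (k - j)%N => [|n [IH1 IH2]] //.
  have [h1 h2] := nested (n + j)%N.
  by split; [exact: le_trans h1|exact: le_trans IH2].
have cross j k : (s j).1 <= (s k).2.
  have [lj _] := mono j (maxn j k) (leq_maxl _ _).
  have [_ rk] := mono k (maxn j k) (leq_maxr _ _).
  exact: le_trans lj (le_trans (s12 _) rk).
pose E := range (fun k => (s k).1).
have ubE : has_ubound E by exists (s 0%N).2 => _ [k _ <-]; exact: cross.
exists (sup E) => k; apply/andP; split; first by apply: ub_le_sup => //; exists k.
by apply: ge_sup; [exists (s 0%N).1, 0%N | move=> _ [j _ <-]; exact: cross].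
Qed.

Lemma itv_nowhere_dense_cover (A : nat -> set R) :
  (forall k, itv_nowhere_dense (A k)) -> exists x, forall k, ~ A k x.
Proof.
move=> ndA.
have /boolp.choice[g Hg] : forall kp : nat * (R * R), exists q,
    kp.2.1 < kp.2.2 -> subitv_avoiding (A kp.1) kp.2.1 kp.2.2 q.
  move=> [k [a b]] /=; have [ab|_] := ltP a b; last by exists (0, 0).
  by have [q Hq] := ndA k a b ab; exists q.
pose s k := iteri k (fun k p => g (k, p)) (0, 1).
have sS k : s k.+1 = g (k, s k) by [].
have s12 k : (s k).1 < (s k).2.
  by elim: k => [|k IH]; [rewrite /=; lra | rewrite sS; case: (Hg (k, s k) IH)].
have avoid k : subitv_avoiding (A k) (s k).1 (s k).2 (s k.+1).
  exact: Hg (k, s k) (s12 k).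
have [x xs] : exists x, forall k, (s k).1 <= x <= (s k).2.
  apply: nested_intervals_meet => [k|k]; first exact: ltW.
  by have [] := avoid k.
by exists x => k; have [_ _ _] := avoid k; apply.
Qed.

Lemma chiQ_not_borel1 : ~ borel1 (@chiQ R : sorgenfrey R -> R).
Proof.
move=> /(_ _ (@open_lt R (1 / 2)))[F cF chiQ_F].
have chiQ_rat (r : rat) : chiQ (ratr r : sorgenfrey R) = 1.
  by rewrite /chiQ asboolT //; exists r.
have F_irr k (r : rat) : ~ F k (ratr r).
  move=> Fkr; have : (@chiQ R @^-1` [set y : R | y < 1 / 2]) (ratr r : sorgenfrey R).
    by rewrite chiQ_F; exists k.
  by rewrite /= chiQ_rat; lra.
(* [q] enumerates the rationals: [q (pickle r) = ratr r]. *)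
pose q k : R := if choice.unpickle k is Some r then ratr r else 0.
have [x xA] : exists x : R, forall k, ~ (F k `|` [set q k]) x.
  apply: itv_nowhere_dense_cover => k; apply: itv_nowhere_denseU.
    exact: sorgenfrey_closed_itv_nowhere_dense.
  exact: itv_nowhere_dense_set1.
have chiQ_x : chiQ (x : sorgenfrey R) = 0.
  rewrite /chiQ asboolF // => -[r xr]; apply: (xA (choice.pickle r)); right.
  by rewrite /q choice.pickleK.
have : (@chiQ R @^-1` [set y : R | y < 1 / 2]) (x : sorgenfrey R).
  by rewrite /= chiQ_x; lra.
by rewrite chiQ_F => -[k _ Fkx]; apply: (xA k); left.
Qed.

End SorgenfreyLine.

Theorem mainTheorem6 (R : realType) :
  (forall (Y : Type) (d : Y -> Y -> R), is_metric d ->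
     forall f : sorgenfrey R -> Y, weakly_separated d f) /\
  weakly_separated (@dist_R R) (@chiQ R) /\
  ~ borel1 (@chiQ R : sorgenfrey R -> R).
Proof.
split; first by move=> Y d [_ d0 _ _] f; apply: sorgenfrey_weakly_separated => y; exact/d0.
split; last exact: chiQ_not_borel1.
by apply: sorgenfrey_weakly_separated => y; rewrite /dist_R subrr normr0.
Qed.
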